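(* Let $(X,\mathrm{dist})$ be a metric space, $\Sigma$ a metric space, and $\{U_\sigma(t,\tau)\}_{\sigma\in\Sigma}$ a family of processes on $X$. If the family is uniformly asymptotically compact, then it possesses the uniform global attractor $A_\Sigma$, and $A_\Sigma=A^\star_\Sigma$.
   Context: A process on $X$ is a family of maps $U(t,\tau):X\to X$, indexed by reals $t\ge\tau$, with $U(\tau,\tau)=\mathrm{id}_X$ and $U(t,\tau)=U(t,s)U(s,\tau)$ for $t\ge s\ge\tau$; no continuity is assumed. For nonempty $B,C\subset X$, $\delta_X(B,C)=\sup_{x\in B}\inf_{\xi\in C}\mathrm{dist}(x,\xi)$. A set $K\subset X$ is uniformly attracting if for every bounded $C\subset X$, $\lim_{t-\tau\to\infty}\sup_{\sigma\in\Sigma}\delta_X(U_\sigma(t,\tau)C,K)=0$. The family is uniformly asymptotically compact if there exists a compact uniformly attracting set. A compact set $A_\Sigma\subset X$ is the uniform global attractor of the family if it is uniformly attracting and is contained in every compact uniformly attracting set. $\mathfrak{C}_\Sigma$ is the collection of all sequences $y_n=U_{\sigma_n}(t_n,\tau_n)x_n$ with $x_n$ a bounded sequence in $X$, $\sigma_n\in\Sigma$, $t_n-\tau_n\to\infty$, and $A^\star_\Sigma=\{x\in X: y_n\to x$ along a subsequence, for some $y_n\in\mathfrak{C}_\Sigma\}$. *)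

From Stdlib Require Import Reals List.
Open Scope R_scope.

Record MetricSpace := {
  carrier :> Type;
  dist : carrier -> carrier -> R;
  dist_nonneg : forall x y, 0 <= dist x y;
  dist_eq0 : forall x y, dist x y = 0 <-> x = y;
  dist_sym : forall x y, dist x y = dist y x;
  dist_tri : forall x y z, dist x z <= dist x y + dist y z
}.

Arguments dist {m} _ _.

Section Defs.
Variable X : MetricSpace.

Definition open_set (O : X -> Prop) : Prop :=
  forall x, O x -> exists eps, 0 < eps /\ forall y, dist x y < eps -> O y.

Definition compact_set (K : X -> Prop) : Prop :=
  forall (I : Type) (O : I -> X -> Prop),
    (forall i, open_set (O i)) ->
    (forall x, K x -> exists i, O i x) ->
    exists l : list I, forall x, K x -> exists i, In i l /\ O i x.

Definition bounded_set (C : X -> Prop) : Prop :=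
  exists x0 r, forall x, C x -> dist x0 x <= r.

Definition nonempty (C : X -> Prop) : Prop := exists x, C x.

Definition is_process (V : R -> R -> X -> X) : Prop :=
  (forall tau x, V tau tau x = x) /\
  (forall t s tau x, tau <= s -> s <= t -> V t tau x = V t s (V s tau x)).

Definition uniformly_attracting {Sg : Type} (U : Sg -> R -> R -> X -> X)
    (K : X -> Prop) : Prop :=
  forall C : X -> Prop, nonempty C -> bounded_set C ->
  forall eps, 0 < eps -> exists T, forall t tau, tau <= t -> T <= t - tau ->
    forall (s : Sg) x, C x -> exists xi, K xi /\ dist (U s t tau x) xi < eps.

Definition uniformly_asymptotically_compact {Sg : Type}
    (U : Sg -> R -> R -> X -> X) : Prop :=
  exists K, compact_set K /\ uniformly_attracting U K.

Definition uniform_global_attractor {Sg : Type} (U : Sg -> R -> R -> X -> X)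
    (A : X -> Prop) : Prop :=
  compact_set A /\ uniformly_attracting U A /\
  forall K, compact_set K -> uniformly_attracting U K -> forall x, A x -> K x.

Definition seq_converges (u : nat -> X) (x : X) : Prop :=
  forall eps, 0 < eps -> exists N, forall n, (N <= n)%nat -> dist (u n) x < eps.

Definition Astar {Sg : Type} (U : Sg -> R -> R -> X -> X) (x : X) : Prop :=
  exists (xs : nat -> X) (ss : nat -> Sg) (ts taus : nat -> R),
    bounded_set (fun y => exists n, xs n = y) /\
    (forall n, taus n <= ts n) /\
    (forall M, exists N, forall n, (N <= n)%nat -> M <= ts n - taus n) /\
    exists phi : nat -> nat, (forall n, (phi n < phi (S n))%nat) /\
      seq_converges (fun n => U (ss (phi n)) (ts (phi n)) (taus (phi n)) (xs (phi n))) x.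

End Defs.

From Stdlib Require Import Reals List Lra Lia Classical ClassicalEpsilon.
(* After Reals, so that [dist] refers to the distance of [MetricSpace]. *)
Open Scope R_scope.

(* A* is contained in every compact uniformly attracting set K, since its
   points are limits of trajectories that approach K, and K is closed.  Given
   one compact attracting set K0, A* is closed: a point of A* is reached
   from the bounded 1-neighbourhood of K0 at arbitrarily large times, so a diagonal
   sequence shows that limits of points of A* are in A*.  Being a closed
   subset of K0, A* is compact.  Finally A* attracts uniformly: otherwise
   there are trajectories staying eps-far from A* while approaching K0, and
   by compactness of K0 a subsequence converges to a point of A*. *)

Lemma inv_INR_succ_pos (n : nat) : 0 < / (INR n + 1).
Proof. apply Rinv_0_lt_compat; pose proof (pos_INR n); lra. Qed.

Lemma inv_INR_succ_antitone (m n : nat) :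
  (m <= n)%nat -> / (INR n + 1) <= / (INR m + 1).
Proof.
  intro Hmn; apply le_INR in Hmn; pose proof (pos_INR m).
  apply Rinv_le_contravar; lra.
Qed.

Lemma inv_INR_succ_lt (eps : R) :
  0 < eps -> exists N, forall n, (N <= n)%nat -> / (INR n + 1) < eps.
Proof.
  intro Heps; destruct (INR_unbounded (/ eps)) as [N HN]; exists N.
  intros n Hn; eapply Rle_lt_trans; [exact (inv_INR_succ_antitone _ _ Hn)|].
  rewrite <- (Rinv_inv eps); apply Rinv_lt_contravar; [|lra].
  apply Rmult_lt_0_compat; [apply Rinv_0_lt_compat|]; pose proof (pos_INR N); lra.
Qed.

Lemma list_max_map_ge (I : Type) (f : I -> nat) (l : list I) (i : I) :
  In i l -> (f i <= list_max (map f l))%nat.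
Proof.
  intro Hi; apply (proj1 (Forall_forall _ _) (proj1 (list_max_le _ _) (le_n _))).
  now apply in_map.
Qed.

Definition strictly_increasing (phi : nat -> nat) : Prop :=
  forall n, (phi n < phi (S n))%nat.

Lemma strictly_increasing_ge_id (phi : nat -> nat) :
  strictly_increasing phi -> forall n, (n <= phi n)%nat.
Proof. intros Hphi n; induction n; [lia|]; specialize (Hphi n); lia. Qed.

(* Passing the previous index + 1 as the lower bound [N] of [g m N] makes the
   chosen indices strictly increasing. *)
Fixpoint chain_indices (g : nat -> nat -> nat) (m : nat) : nat :=
  match m with
  | O => g O O
  | S m' => g (S m') (S (chain_indices g m'))
  end.

Section MetricFacts.
Variable X : MetricSpace.

Definition adherent (F : X -> Prop) (x : X) : Prop :=
  forall eps, 0 < eps -> exists a, F a /\ dist x a < eps.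

Definition closed_set (F : X -> Prop) : Prop := forall x, adherent F x -> F x.

Definition nbhd (K : X -> Prop) (r : R) (z : X) : Prop :=
  exists xi, K xi /\ dist z xi < r.

Definition cluster_value (u : nat -> X) (p : X) : Prop :=
  forall eps, 0 < eps -> forall N, exists n, (N <= n)%nat /\ dist (u n) p < eps.

Lemma dist_self (x : X) : dist x x = 0.
Proof. now apply dist_eq0. Qed.

Lemma dist_pos_neq (x y : X) : x <> y -> 0 < dist x y.
Proof.
  intro Hxy; destruct (Rle_lt_or_eq_dec 0 (dist x y) (dist_nonneg X x y)); auto.
  exfalso; apply Hxy, dist_eq0; auto.
Qed.

Lemma open_dist_lt (c : X) (r : R) : open_set X (fun y => dist c y < r).
Proof.
  intros y Hy; exists (r - dist c y); split; [lra|].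
  intros z Hz; pose proof (dist_tri X c y z); lra.
Qed.

Lemma open_dist_gt (c : X) (r : R) : open_set X (fun y => r < dist c y).
Proof.
  intros y Hy; exists (dist c y - r); split; [lra|].
  intros z Hz; pose proof (dist_tri X c z y); pose proof (dist_sym X z y); lra.
Qed.

Lemma compact_closed (K : X -> Prop) : compact_set X K -> closed_set K.
Proof.
  intros HK x Hx; apply NNPP; intro HxK.
  destruct (HK nat (fun n y => / (INR n + 1) < dist x y)) as [l Hl].
  - intro n; apply open_dist_gt.
  - intros k Hk; destruct (inv_INR_succ_lt (dist x k)) as [N HN].
    { apply dist_pos_neq; intros ->; contradiction. }
    exists N; exact (HN N (le_n N)).
  - set (M := list_max (map (fun n => n) l)).
    destruct (Hx _ (inv_INR_succ_pos M)) as [k [Hk Hxk]].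
    destruct (Hl k Hk) as [i [Hi Hik]].
    assert (HiM : (i <= M)%nat) by exact (list_max_map_ge _ (fun n => n) l i Hi).
    pose proof (inv_INR_succ_antitone _ _ HiM); lra.
Qed.

Lemma compact_bounded_from (x0 : X) (K : X -> Prop) :
  compact_set X K -> exists r, forall x, K x -> dist x0 x <= r.
Proof.
  intro HK; destruct (HK nat (fun n y => dist x0 y < INR n)) as [l Hl].
  - intro n; apply open_dist_lt.
  - intros x _; destruct (INR_unbounded (dist x0 x)) as [n Hn]; exists n; lra.
  - exists (INR (list_max (map (fun n => n) l))); intros x Hx.
    destruct (Hl x Hx) as [i [Hi Hxi]].
    pose proof (le_INR _ _ (list_max_map_ge _ (fun n => n) l i Hi)); lra.
Qed.

Lemma compact_nbhd_bounded (x0 : X) (K : X -> Prop) (r : R) :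
  compact_set X K -> bounded_set X (nbhd K r).
Proof.
  intro HK; destruct (compact_bounded_from x0 K HK) as [b Hb].
  exists x0, (b + r); intros z [xi [Hxi Hz]]; specialize (Hb xi Hxi).
  pose proof (dist_tri X x0 xi z); pose proof (dist_sym X z xi); lra.
Qed.

Lemma closed_subset_compact (F K : X -> Prop) :
  compact_set X K -> closed_set F -> (forall x, F x -> K x) -> compact_set X F.
Proof.
  intros HK HF HFK I O HO Hcov.
  assert (Hopen : open_set X (fun y => ~ F y)).
  { intros y Hy.
    assert (Hsep : exists eps, 0 < eps /\ forall a, F a -> eps <= dist y a).
    { apply NNPP; intro Hn; apply Hy, HF; intros eps Heps.
      apply NNPP; intro Hc; apply Hn; exists eps; split; auto.
      intros a Ha; destruct (Rlt_or_le (dist y a) eps); auto.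
      exfalso; apply Hc; eauto. }
    destruct Hsep as [eps [Heps Hsep]]; exists eps; split; auto.
    intros z Hz HFz; specialize (Hsep z HFz); lra. }
  destruct (HK (option I)
              (fun o y => match o with Some i => O i y | None => ~ F y end))
    as [l Hl].
  - intros [i|]; auto.
  - intros x _; destruct (classic (F x)) as [Hx|Hx].
    + destruct (Hcov x Hx) as [i Hi]; now exists (Some i).
    + now exists None.
  - exists (flat_map (fun o => match o with Some i => i :: nil | None => nil end) l).
    intros x Hx; destruct (Hl x (HFK x Hx)) as [[i|] [Hin Ho]]; [|contradiction].
    exists i; split; auto; apply in_flat_map; exists (Some i); split; [auto|now left].
Qed.

Lemma compact_cluster_value (K : X -> Prop) (u : nat -> X) :
  compact_set X K -> (forall n, K (u n)) -> exists p, cluster_value u p.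
Proof.
  intros HK Hu; apply NNPP; intro Hn.
  assert (Hsep : forall p, exists eN : R * nat, 0 < fst eN /\
            forall n, (snd eN <= n)%nat -> fst eN <= dist (u n) p).
  { intro p; apply NNPP; intro Hc; apply Hn; exists p; intros eps Heps N.
    apply NNPP; intro Hc2; apply Hc; exists (eps, N); split; auto; intros n HNn.
    destruct (Rlt_or_le (dist (u n) p) eps); auto; exfalso; apply Hc2; eauto. }
  destruct (choice _ Hsep) as [eN HeN].
  destruct (HK X (fun p y => dist p y < fst (eN p))) as [l Hl].
  - intro p; apply open_dist_lt.
  - intros p _; exists p; rewrite dist_self; apply HeN.
  - set (M := list_max (map (fun p => snd (eN p)) l)).
    destruct (Hl (u M) (Hu M)) as [p [Hp Hclose]].
    destruct (HeN p) as [_ Hfar].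
    specialize (Hfar M (list_max_map_ge _ (fun p => snd (eN p)) l p Hp)).
    pose proof (dist_sym X p (u M)); lra.
Qed.

Lemma cluster_value_subseq (u : nat -> X) (p : X) :
  cluster_value u p ->
  exists phi, strictly_increasing phi /\ seq_converges X (fun n => u (phi n)) p.
Proof.
  intro Hp.
  destruct (@choice (nat * nat) nat
              (fun mN n => (snd mN <= n)%nat /\ dist (u n) p < / (INR (fst mN) + 1)))
    as [g Hg].
  { intros [m N]; apply Hp, inv_INR_succ_pos. }
  set (phi := chain_indices (fun m N => g (m, N))).
  assert (Hclose : forall m, dist (u (phi m)) p < / (INR m + 1)).
  { intros [|m]; [apply (Hg (0%nat, 0%nat))|apply (Hg (S m, _))]. }
  exists phi; split.
  - intro n; apply (Hg (S n, _)).
  - intros eps Heps; destruct (inv_INR_succ_lt eps Heps) as [N HN].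
    exists N; intros n Hn; specialize (HN n Hn); specialize (Hclose n); lra.
Qed.

Lemma compact_approx_subseq (K : X -> Prop) (y : nat -> X) :
  compact_set X K -> (forall n, nbhd K (/ (INR n + 1)) (y n)) ->
  exists p phi, strictly_increasing phi /\ seq_converges X (fun n => y (phi n)) p.
Proof.
  intros HK Hy; destruct (choice _ Hy) as [k Hk].
  destruct (compact_cluster_value K k HK (fun n => proj1 (Hk n))) as [p Hp].
  destruct (cluster_value_subseq k p Hp) as [phi [Hphi Hconv]].
  exists p, phi; split; auto; intros eps Heps.
  destruct (inv_INR_succ_lt (eps / 2)) as [N1 HN1]; [lra|].
  destruct (Hconv (eps / 2)) as [N2 HN2]; [lra|].
  exists (Nat.max N1 N2); intros n Hn.
  pose proof (strictly_increasing_ge_id phi Hphi n).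
  specialize (HN1 (phi n) ltac:(lia)); specialize (HN2 n ltac:(lia)).
  pose proof (proj2 (Hk (phi n))); pose proof (dist_tri X (y (phi n)) (k (phi n)) p).
  lra.
Qed.

End MetricFacts.

Section UniformAttractor.
Variables (X Sg : MetricSpace) (U : Sg -> R -> R -> X -> X).

Record sample := { start : X; symbol : Sg; initial : R; final : R }.

Definition endpoint (q : sample) : X := U (symbol q) (final q) (initial q) (start q).

Lemma Astar_intro (B : X -> Prop) (q : nat -> sample) (phi : nat -> nat) (x : X) :
  bounded_set X B -> (forall n, B (start (q n))) ->
  (forall n, initial (q n) <= final (q n)) ->
  (forall n, INR n <= final (q n) - initial (q n)) ->
  strictly_increasing phi ->
  seq_converges X (fun n => endpoint (q (phi n))) x -> Astar X U x.
Proof.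
  intros [x0 [r Hr]] HB Hle Hlong Hphi Hconv.
  exists (fun n => start (q n)), (fun n => symbol (q n)),
    (fun n => final (q n)), (fun n => initial (q n)).
  repeat split; auto.
  - exists x0, r; intros y [n <-]; auto.
  - intro M; destruct (INR_unbounded M) as [N HN]; exists N; intros n Hn.
    apply le_INR in Hn; specialize (Hlong n); lra.
  - now exists phi.
Qed.

Lemma Astar_sub_compact_attracting (K : X -> Prop) :
  compact_set X K -> uniformly_attracting X U K -> forall x, Astar X U x -> K x.
Proof.
  intros HKc HKa x [xs [ss [ts [taus [Hb [Hle [Hlong [phi [Hphi Hconv]]]]]]]]].
  apply (compact_closed X K HKc); intros eps Heps.
  destruct (HKa (fun y => exists n, xs n = y)) with (eps := eps / 2) as [T HT];
    [exists (xs O), O; auto|auto|lra|].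
  destruct (Hlong T) as [N1 HN1]; destruct (Hconv (eps / 2)) as [N2 HN2]; [lra|].
  set (n := Nat.max N1 N2).
  pose proof (strictly_increasing_ge_id phi Hphi n).
  destruct (HT (ts (phi n)) (taus (phi n)) (Hle _) (HN1 (phi n) ltac:(lia))
              (ss (phi n)) (xs (phi n))) as [xi [Hxi Hd]]; [eauto|].
  exists xi; split; auto.
  specialize (HN2 n ltac:(lia)); cbn in HN2.
  set (y := U (ss (phi n)) (ts (phi n)) (taus (phi n)) (xs (phi n))) in *.
  pose proof (dist_tri X x y xi); pose proof (dist_sym X x y); lra.
Qed.

Lemma Astar_attracting (K0 : X -> Prop) :
  compact_set X K0 -> uniformly_attracting X U K0 ->
  uniformly_attracting X U (Astar X U).
Proof.
  intros HKc HKa C HCne HCb eps Heps; apply NNPP; intro Hn.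
  assert (Hfar : forall n, exists q, C (start q) /\ initial q <= final q /\
            INR n <= final q - initial q /\ nbhd X K0 (/ (INR n + 1)) (endpoint q) /\
            forall xi, Astar X U xi -> eps <= dist (endpoint q) xi).
  { intro n; destruct (HKa C HCne HCb _ (inv_INR_succ_pos n)) as [T HT].
    apply NNPP; intro Hc; apply Hn; exists (Rmax T (INR n)).
    intros t tau Hle HTt s x Hx; apply NNPP; intro Hc2; apply Hc.
    pose proof (Rmax_l T (INR n)); pose proof (Rmax_r T (INR n)).
    exists {| start := x; symbol := s; initial := tau; final := t |}.
    unfold endpoint; cbn; repeat split; auto; try lra.
    - destruct (HT t tau Hle ltac:(lra) s x Hx) as [xi [Hxi Hd]]; now exists xi.
    - intros xi Hxi; destruct (Rlt_or_le (dist (U s t tau x) xi) eps); auto.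
      exfalso; apply Hc2; eauto. }
  destruct (choice _ Hfar) as [q Hq].
  destruct (compact_approx_subseq X K0 (fun n => endpoint (q n)) HKc
              (fun n => proj1 (proj2 (proj2 (proj2 (Hq n))))))
    as [p [phi [Hphi Hconv]]].
  assert (Hp : Astar X U p)
    by (apply (Astar_intro C q phi p HCb); auto; intro n; apply Hq).
  destruct (Hconv eps Heps) as [N HN]; specialize (HN N (le_n N)).
  pose proof (proj2 (proj2 (proj2 (proj2 (Hq (phi N))))) p Hp); cbn in HN; lra.
Qed.

Hypothesis HU : forall s : Sg, is_process X (U s).

(* Starting the trajectory at a later time [initial + h], with [h] beyond the
   attraction time of K0, moves its starting point into [nbhd K0 1] without
   changing its endpoint, by the cocycle property. *)
Lemma Astar_reached_from_nbhd (K0 : X -> Prop) :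
  uniformly_attracting X U K0 ->
  forall a, Astar X U a -> forall M eps, 0 < eps ->
  exists q, nbhd X K0 1 (start q) /\ initial q <= final q /\
    M <= final q - initial q /\ dist (endpoint q) a < eps.
Proof.
  intros HKa a [xs [ss [ts [taus [Hb [Hle [Hlong [phi [Hphi Hconv]]]]]]]]] M eps Heps.
  destruct (HKa (fun y => exists n, xs n = y)) with (eps := 1) as [T HT];
    [exists (xs O), O; auto|auto|lra|].
  pose proof (Rmax_l T 0); pose proof (Rmax_r T 0); set (h := Rmax T 0) in *.
  pose proof (Rmax_l M 0); pose proof (Rmax_r M 0).
  destruct (Hlong (h + Rmax M 0)) as [N1 HN1].
  destruct (Hconv eps Heps) as [N2 HN2].
  set (n := Nat.max N1 N2); pose proof (strictly_increasing_ge_id phi Hphi n).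
  set (m := phi n); specialize (HN1 m ltac:(unfold m; lia)); specialize (HN2 n ltac:(lia)).
  cbn in HN2; fold m in HN2.
  set (tau' := taus m + h).
  exists {| start := U (ss m) tau' (taus m) (xs m); symbol := ss m;
            initial := tau'; final := ts m |}.
  unfold endpoint; cbn; repeat split; try (unfold tau'; lra).
  - destruct (HT tau' (taus m) ltac:(unfold tau'; lra) ltac:(unfold tau'; lra)
                (ss m) (xs m)) as [xi [Hxi Hd]]; [eauto|now exists xi].
  - rewrite <- (proj2 (HU (ss m)) (ts m) tau' (taus m) (xs m)); unfold tau'; lra.
Qed.

Lemma Astar_closed (K0 : X -> Prop) :
  compact_set X K0 -> uniformly_attracting X U K0 -> closed_set X (Astar X U).
Proof.
  intros HKc HKa x Hx.
  assert (Happrox : forall n, exists q, nbhd X K0 1 (start q) /\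
            initial q <= final q /\ INR n <= final q - initial q /\
            dist (endpoint q) x < / (INR n + 1)).
  { intro n; pose proof (inv_INR_succ_pos n).
    destruct (Hx (/ (INR n + 1) / 2)) as [a [Ha Hxa]]; [lra|].
    destruct (Astar_reached_from_nbhd K0 HKa a Ha (INR n) (/ (INR n + 1) / 2))
      as [q [Hq1 [Hq2 [Hq3 Hq4]]]]; [lra|].
    exists q; repeat split; auto.
    pose proof (dist_tri X (endpoint q) a x); pose proof (dist_sym X x a); lra. }
  destruct (choice _ Happrox) as [q Hq].
  apply (Astar_intro (nbhd X K0 1) q (fun n => n) x (compact_nbhd_bounded X x K0 1 HKc));
    try (intro n; apply Hq).
  - intro n; lia.
  - intros eps Heps; destruct (inv_INR_succ_lt eps Heps) as [N HN]; exists N.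
    intros n Hn; specialize (HN n Hn); pose proof (proj2 (proj2 (proj2 (Hq n)))); lra.
Qed.

Lemma Astar_compact (K0 : X -> Prop) :
  compact_set X K0 -> uniformly_attracting X U K0 -> compact_set X (Astar X U).
Proof.
  intros HKc HKa.
  apply (closed_subset_compact X (Astar X U) K0 HKc (Astar_closed K0 HKc HKa)).
  exact (Astar_sub_compact_attracting K0 HKc HKa).
Qed.

End UniformAttractor.

Theorem theorem3p5 (X : MetricSpace) (Sigma : MetricSpace)
  (U : Sigma -> R -> R -> X -> X)
  (HU : forall s : Sigma, is_process X (U s)) :
  uniformly_asymptotically_compact X U ->
  exists A : X -> Prop,
    uniform_global_attractor X U A /\ (forall x, A x <-> Astar X U x).
Proof.
  intros [K0 [HKc HKa]]; exists (Astar X U); split; [|tauto].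
  split; [|split].
  - exact (Astar_compact X Sigma U HU K0 HKc HKa).
  - exact (Astar_attracting X Sigma U K0 HKc HKa).
  - exact (Astar_sub_compact_attracting X Sigma U).
Qed.
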